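(* Let $X$ be a Tychonoff space and $G$ a subgroup of $C_u(X)$ (with the subspace topology). Then $G$ is strictly R-bounded if and only if $G$ is countable.
   Context: $C(X)$ is the set of continuous real-valued functions on $X$, a topological group under pointwise addition; $C_u(X)$ is $C(X)$ with the topology of uniform convergence. For a topological group $G$ with identity $e$, the R-game is played as follows: in round $n\in\mathbb N$ player ONE chooses a neighborhood $U_n$ of $e$ and player TWO responds with a point $x_n\in G$; TWO wins if $G=\bigcup_n x_n\cdot U_n$. $G$ is strictly R-bounded if TWO has a winning strategy in this game. *)

From Stdlib Require Import Reals List.
Open Scope R_scope.

Record TopSpace := {
  carrier :> Type;
  is_open : (carrier -> Prop) -> Prop;
  open_full : is_open (fun _ => True);
  open_inter : forall A B, is_open A -> is_open B -> is_open (fun x => A x /\ B x);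
  open_union : forall (F : (carrier -> Prop) -> Prop),
      (forall A, F A -> is_open A) -> is_open (fun x => exists A, F A /\ A x)
}.

Definition R_open (V : R -> Prop) : Prop :=
  forall y, V y -> exists eps, 0 < eps /\ forall z, Rabs (z - y) < eps -> V z.

Definition continuous_real {X : TopSpace} (f : X -> R) : Prop :=
  forall V, R_open V -> is_open X (fun x => V (f x)).

Definition is_closed {X : TopSpace} (F : X -> Prop) : Prop :=
  is_open X (fun x => ~ F x).

Definition T1_space (X : TopSpace) : Prop :=
  forall a : X, is_closed (fun x => x = a).

Definition completely_regular (X : TopSpace) : Prop :=
  forall (F : X -> Prop) (a : X), is_closed F -> ~ F a ->
    exists f : X -> R, continuous_real f /\
      (forall x, 0 <= f x <= 1) /\ f a = 0 /\ (forall x, F x -> f x = 1).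

Definition Tychonoff (X : TopSpace) : Prop := T1_space X /\ completely_regular X.

Definition subgroup_C {X : TopSpace} (G : (X -> R) -> Prop) : Prop :=
  (forall g, G g -> continuous_real g) /\
  G (fun _ => 0) /\
  (forall f g, G f -> G g -> G (fun x => f x + g x)) /\
  (forall g, G g -> G (fun x => - g x)).

(** Neighborhoods of the identity 0 in G, where G carries the subspace
    topology of C_u(X) (topology of uniform convergence): U ⊆ G contains
    some uniform ball {g ∈ G | ∀x, |g x| <= eps}, eps > 0. *)
Definition nbhd0 {X : TopSpace} (G : (X -> R) -> Prop) (U : (X -> R) -> Prop) : Prop :=
  (forall g, U g -> G g) /\
  exists eps, 0 < eps /\ forall g, G g -> (forall x, Rabs (g x) <= eps) -> U g.

(** The moves of ONE up to round n (inclusive). *)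
Definition prefix {A : Type} (u : nat -> A) (n : nat) : list A := map u (seq 0 (S n)).

(** A strategy of TWO: given ONE's moves U_0,...,U_n, choose x_n. *)
Definition strategy_TWO (X : TopSpace) := list ((X -> R) -> Prop) -> (X -> R).

Definition winning_TWO {X : TopSpace} (G : (X -> R) -> Prop) (s : strategy_TWO X) : Prop :=
  forall U : nat -> ((X -> R) -> Prop),
    (forall n, nbhd0 G (U n)) ->
    (forall n, G (s (prefix U n))) /\
    (forall g, G g <-> exists n u, U n u /\ g = (fun x => s (prefix U n) x + u x)).

Definition strictly_R_bounded {X : TopSpace} (G : (X -> R) -> Prop) : Prop :=
  exists s : strategy_TWO X, winning_TWO G s.

Definition countable_set {A : Type} (G : A -> Prop) : Prop :=
  exists e : nat -> A, forall g, G g -> exists n, e n = g.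

(* If TWO has a winning strategy s, then every g in G has a finite position
   p (a list of radii indices already played by ONE) such that, whatever ball
   of radius 1/(k+1) ONE plays next, g lies in that ball around TWO's answer:
   otherwise ONE could always play a ball avoiding g and defeat s.  Such a g
   is the limit of TWO's answers at p, so it is determined by p, and there are
   only countably many positions.  Conversely, TWO wins against any play by
   listing an enumeration of G, since each U_n contains 0. *)

From Stdlib Require Import Reals List.
From Stdlib Require Import Classical ClassicalEpsilon FunctionalExtensionality Lra Lia Cantor.
Import ListNotations.

Fixpoint decode_length (l m : nat) : list nat :=
  match l with
  | O => []
  | S l' => let (a, b) := Cantor.of_nat m in a :: decode_length l' b
  end.

Definition decode_list (n : nat) : list nat :=
  let (l, m) := Cantor.of_nat n in decode_length l m.

Lemma decode_length_surj (s : list nat) : exists m, decode_length (length s) m = s.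
Proof.
  induction s as [|a s [m Hm]]; simpl.
  - exists 0%nat; reflexivity.
  - exists (Cantor.to_nat (a, m)). now rewrite Cantor.cancel_of_to, Hm.
Qed.

Lemma decode_list_surj (s : list nat) : exists n, decode_list n = s.
Proof.
  destruct (decode_length_surj s) as [m Hm].
  exists (Cantor.to_nat (length s, m)). unfold decode_list.
  now rewrite Cantor.cancel_of_to.
Qed.

Lemma eq_of_Rabs_le_inv (c a b : R) :
  (forall k : nat, Rabs (a - b) <= c / INR (S k)) -> a = b.
Proof.
  intros H. destruct (Req_dec (a - b) 0) as [E|E]; [lra|].
  assert (Hc : 0 <= c).
  { specialize (H 0%nat). rewrite Rdiv_1_r in H.
    generalize (Rabs_pos (a - b)); lra. }
  destruct (Req_dec c 0) as [->|Hc0].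
  { specialize (H 0%nat). rewrite Rdiv_1_r in H.
    generalize (Rabs_pos_lt _ E); lra. }
  assert (P : 0 < Rabs (a - b) / c).
  { apply Rdiv_lt_0_compat; [now apply Rabs_pos_lt|lra]. }
  destruct (archimed_cor1 _ P) as [[|N] [HN HN0]]; [lia|].
  specialize (H N).
  assert (Hpos : 0 < INR (S N)) by (apply lt_0_INR; lia).
  apply Rmult_lt_compat_l with (r := c) in HN; [|lra].
  replace (c * (Rabs (a - b) / c)) with (Rabs (a - b)) in HN by (field; lra).
  unfold Rdiv in H. lra.
Qed.

Section Strategies.
Variable X : TopSpace.
Variable G : (X -> R) -> Prop.

Definition ball (k : nat) : (X -> R) -> Prop :=
  fun g => G g /\ forall x, Rabs (g x) <= / INR (S k).

Lemma nbhd0_ball k : nbhd0 G (ball k).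
Proof.
  split; [now intros g []|].
  exists (/ INR (S k)). split; [apply Rinv_0_lt_compat, lt_0_INR; lia|].
  now split.
Qed.

Variable s : strategy_TWO X.

(* [p] lists the indices of the balls ONE has played so far; TWO's next answer
   is computed once ONE has played one more ball. *)
Definition answer (p : list nat) (k : nat) : X -> R := s (map ball (p ++ [k])).

Definition captures (p : list nat) (g : X -> R) : Prop :=
  forall k, exists u, ball k u /\ g = (fun x => answer p k x + u x).

Fixpoint play (c : list nat -> nat) (n : nat) : list nat :=
  match n with
  | O => []
  | S n' => play c n' ++ [c (play c n')]
  end.

Lemma prefix_play (c : list nat -> nat) n :
  prefix (fun i => ball (c (play c i))) n = map ball (play c n ++ [c (play c n)]).
Proof.
  unfold prefix. rewrite <- (map_map (fun i => c (play c i)) ball).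
  f_equal. change (play c n ++ [c (play c n)]) with (play c (S n)).
  induction (S n) as [|m IH]; [reflexivity|].
  now rewrite seq_S, map_app, IH.
Qed.

Hypothesis s_wins : winning_TWO G s.

Lemma captured_somewhere g : G g -> exists p, captures p g.
Proof.
  intros Hg. apply NNPP; intro Hnone.
  assert (Hescape : forall p, exists k,
             ~ exists u, ball k u /\ g = (fun x => answer p k x + u x)).
  { intro p. apply NNPP; intro Hp. apply Hnone. exists p. intro k.
    apply NNPP; intro Hk. apply Hp. now exists k. }
  destruct (choice _ Hescape) as [c Hc].
  destruct (s_wins (fun n => ball (c (play c n))) (fun n => nbhd0_ball _))
    as [_ Hcover].
  destruct (proj1 (Hcover g) Hg) as [n [u [Hu Hgu]]].
  apply (Hc (play c n)). exists u. split; [exact Hu|].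
  now rewrite Hgu, prefix_play.
Qed.

Lemma captures_functional p g h : captures p g -> captures p h -> g = h.
Proof.
  intros Hg Hh. apply functional_extensionality; intro x.
  apply (eq_of_Rabs_le_inv 2). intro k.
  destruct (Hg k) as [u [[_ Hu] ->]]. destruct (Hh k) as [v [[_ Hv] ->]].
  replace (answer p k x + u x - (answer p k x + v x)) with (u x + - v x) by ring.
  eapply Rle_trans; [apply Rabs_triang|]. rewrite Rabs_Ropp.
  specialize (Hu x); specialize (Hv x). unfold Rdiv. lra.
Qed.

End Strategies.

Lemma strictly_R_bounded_countable (X : TopSpace) (G : (X -> R) -> Prop) :
  strictly_R_bounded G -> countable_set G.
Proof.
  intros [s W].
  exists (fun n => epsilon (inhabits (fun _ : X => 0))
                     (captures X G s (decode_list n))).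
  intros g Hg.
  destruct (captured_somewhere X G s W g Hg) as [p Hp].
  destruct (decode_list_surj p) as [n <-]. exists n.
  apply (captures_functional X G s (decode_list n)); [|exact Hp].
  apply epsilon_spec. now exists g.
Qed.

Lemma countable_strictly_R_bounded (X : TopSpace) (G : (X -> R) -> Prop) :
  G (fun _ => 0) -> (forall f g, G f -> G g -> G (fun x => f x + g x)) ->
  countable_set G -> strictly_R_bounded G.
Proof.
  intros H0 Hadd [e He].
  (* At round n (the history has length n + 1) TWO plays [e n] when it lies in G. *)
  pose (t := fun l : list ((X -> R) -> Prop) =>
               let n := pred (length l) in
               if excluded_middle_informative (G (e n)) then e n else fun _ => 0).
  assert (Ht : forall U n, t (prefix U n) =
                 if excluded_middle_informative (G (e n)) then e n else fun _ => 0).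
  { intros U n. unfold t, prefix. now rewrite length_map, length_seq. }
  exists t. intros U HU. split.
  - intro n. rewrite Ht. now destruct excluded_middle_informative.
  - intro g. split.
    + intro Hg. destruct (He g Hg) as [n <-]. exists n, (fun _ => 0). split.
      * destruct (HU n) as [_ [eps [Heps Hball]]]. apply Hball; [exact H0|].
        intro x. rewrite Rabs_R0. lra.
      * rewrite Ht. destruct excluded_middle_informative; [|contradiction].
        apply functional_extensionality; intro x. ring.
    + intros [n [u [Hu ->]]]. apply Hadd; [|exact (proj1 (HU n) u Hu)].
      rewrite Ht. now destruct excluded_middle_informative.
Qed.

Theorem theorem2p10 (X : TopSpace) (G : (X -> R) -> Prop) :
  Tychonoff X -> subgroup_C G ->
  (strictly_R_bounded G <-> countable_set G).
Proof.
  intros _ [_ [H0 [Hadd _]]]. split.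
  - apply strictly_R_bounded_countable.
  - now apply countable_strictly_R_bounded.
Qed.
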